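(* Let $G_{\mathrm{base}}$ be a forest on $L$ vertices with edge weights $W$, and let $f(z) = \exp(\tau(z))$ where $\tau(z) = az+b$ is an affine map ($a,b\in\mathbb{R}$). Then the mask $\mathbf{M} = [f(\mathrm{dist}_{G_{\mathrm{base}}}(i,j))]_{i,j=1,\dots,L}$ supports matrix-vector multiplication in time $O(L)$; in particular $(G_{\mathrm{base}},f)$ is tractable.
   Context: $\mathrm{dist}_{G_{\mathrm{base}}}(i,j)$ is the weighted shortest-path distance (sum of edge weights along the unique path) between $i$ and $j$. For vertices in different connected components of the forest the corresponding mask entries are taken to be $0$. A pair $(G_{\mathrm{base}},f)$ is tractable if $\mathbf{M}\mathbf{x}$ can be computed in $o(L^2)$ time for every $\mathbf{x}\in\mathbb{R}^L$. Time counts arithmetic operations, including evaluations of $\exp$. *)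

From HB Require Import structures.
From mathcomp Require Import all_boot all_order all_algebra.
From mathcomp Require Import reals sequences exp.
Set Implicit Arguments. Unset Strict Implicit. Unset Printing Implicit Defensive.
Import Order.TTheory GRing.Theory Num.Theory.
Local Open Scope ring_scope.

Definition simple_graph (L : nat) (e : rel 'I_L) : Prop :=
  (forall i j, e i j = e j i) /\ (forall i, ~~ e i i).

Definition has_cycle (L : nat) (e : rel 'I_L) : Prop :=
  exists (i : 'I_L) (p : seq 'I_L),
    [/\ (2 <= size p)%N, path e i p, uniq (i :: p) & e (last i p) i].

Definition forest (L : nat) (e : rel 'I_L) : Prop :=
  simple_graph e /\ ~ has_cycle e.

(* p is a simple path i -> j (the vertex sequence after i) *)
Definition spath (L : nat) (e : rel 'I_L) (i j : 'I_L) (p : seq 'I_L) : bool :=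
  [&& path e i p, last i p == j & uniq (i :: p)].

Definition pweight (R : nzRingType) (L : nat) (W : 'I_L -> 'I_L -> R)
    (i : 'I_L) (p : seq 'I_L) : R :=
  \sum_(k <- zip (belast i p) p) W k.1 k.2.

(* M is the mask [f(dist(i,j))]_{i,j}: dist(i,j) is the weight of the
   (unique, in a forest) path from i to j, and the entry is 0 when i and j
   lie in different components (no path). *)
Definition is_mask (R : nzRingType) (L : nat) (e : rel 'I_L)
    (W : 'I_L -> 'I_L -> R) (f : R -> R) (M : 'M[R]_L) : Prop :=
  forall i j,
    (forall p, spath e i j p -> M i j = f (pweight W i p)) /\
    ((forall p, ~~ spath e i j p) -> M i j = 0).

Inductive input (L : nat) : Type :=
  | InX of 'I_L
  | InA
  | InB
  | InW of 'I_L & 'I_L.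

(* Each instruction computes one new real value; arguments are indices of
   previously computed values. Each instruction costs one unit of time. *)
Inductive instr (L : nat) : Type :=
  | ILoad of input L
  | IConst of int
  | IAdd of nat & nat
  | ISub of nat & nat
  | IMul of nat & nat
  | IExp of nat.

Definition step (R : realType) (L : nat) (env : input L -> R)
    (vs : seq R) (ins : instr L) : R :=
  match ins with
  | ILoad k => env k
  | IConst z => z%:~R
  | IAdd n m => nth 0 vs n + nth 0 vs m
  | ISub n m => nth 0 vs n - nth 0 vs m
  | IMul n m => nth 0 vs n * nth 0 vs m
  | IExp n => expR (nth 0 vs n)
  end.

Definition run (R : realType) (L : nat) (env : input L -> R)
    (prog : seq (instr L)) : seq R :=
  foldl (fun vs ins => rcons vs (step env vs ins)) [::] prog.

Definition env_of (R : realType) (L : nat) (x : 'I_L -> R) (a b : R)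
    (W : 'I_L -> 'I_L -> R) (k : input L) : R :=
  match k with
  | InX i => x i
  | InA => a
  | InB => b
  | InW i j => W i j
  end.

(* Leaf elimination.  Every nonempty forest has a vertex v with at most one neighbour.
   Normalise the mask to G = exp(-b) M, the mask of z |-> exp(a z), so that G_vv = 1.
   If v is isolated, row and column v of G vanish off the diagonal.  Otherwise let u be
   its neighbour and t = exp(a W(u,v)): a simple path ending at v ends with the edge uv,
   so off the diagonal column v of G is t times column u and row v is t times row u.
   Hence, with x' = x + t x_v e_u and G' the mask of the forest without v,
   (G x)_i = (G' x')_i for i <> v and (G x)_v = x_v + t ((G' x')_u - t x_v).
   Each elimination costs nine arithmetic operations, so G x, and then M x = exp(b) G x,
   is computed by a straight-line program of length O(L). *)

From HB Require Import structures.
From mathcomp Require Import all_boot all_order all_algebra.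
From mathcomp Require Import reals sequences exp.
From mathcomp Require Import zify boolp.
Set Implicit Arguments. Unset Strict Implicit. Unset Printing Implicit Defensive.
Import Order.TTheory GRing.Theory Num.Theory.
Local Open Scope ring_scope.

Definition induced (L : nat) (e : rel 'I_L) (S : {set 'I_L}) : rel 'I_L :=
  [rel x y | [&& x \in S, y \in S & e x y]].

Section SimplePaths.

Variables (L : nat) (g : rel 'I_L).

Definition leaf (v : 'I_L) : Prop := forall w w', g v w -> g v w' -> w = w'.

Lemma spath_cons i j k p :
  spath g i j (k :: p) = [&& g i k, i \notin k :: p & spath g k j p].
Proof. by rewrite /spath /= -!andbA; case: (i \notin k :: p); rewrite ?andbF. Qed.

Lemma spath_rcons i j p k :
  spath g i j (rcons p k) =
  [&& spath g i (last i p) p, g (last i p) k, k \notin i :: p & k == j].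
Proof.
rewrite /spath rcons_path last_rcons -rcons_cons rcons_uniq eqxx.
by case: (path g i p) (g _ k) (k == j) (k \notin i :: p) (uniq (i :: p)) => [] [] [] [] [].
Qed.

Lemma spath_last_edge i j q :
  i != j -> spath g i j q ->
  exists2 p, q = rcons p j & g (last i p) j /\ spath g i (last i p) p.
Proof.
case/lastP: q => [|p k] ij; first by rewrite /spath /= (negbTE ij).
by rewrite spath_rcons => /and4P[sp gk _ /eqP kj]; exists p; rewrite -?kj.
Qed.

Lemma spath_first_edge i j q :
  i != j -> spath g i j q -> exists k p, [/\ q = k :: p, g i k & spath g k j p].
Proof.
case: q => [|k p] ij; first by rewrite /spath /= (negbTE ij).
by rewrite spath_cons => /and3P[gik _ sp]; exists k, p.
Qed.

Lemma size_uniq_ord (s : seq 'I_L) : uniq s -> (size s <= L)%N.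
Proof. by move/card_uniqP <-; rewrite -[X in (_ <= X)%N]card_ord max_card. Qed.

Lemma forest_leaf i : forest g -> exists2 v, connect g i v & leaf v.
Proof.
move=> [[gsym girr] nocycle].
suff: forall p, path g i p -> uniq (i :: p) -> exists2 v, connect g i v & leaf v.
  by move/(_ [::]); apply.
move=> p; have [n] := ubnP (L - size p); elim: n => // n IH in i p *.
move=> fuel pth un.
case: (pickP [pred w | g i w && (w \notin i :: p)]) => [w /andP[giw wn] | nb].
  have fuel' : (L - size (i :: p) < n)%N.
    by have := size_uniq_ord (s := w :: i :: p); rewrite cons_uniq wn un /=; lia.
  have [||v iv lv] := IH w (i :: p) fuel'.
  - by rewrite /= gsym giw.
  - by rewrite /= wn.
  by exists v => //; apply: connect_trans (connect1 giw) iv.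
exists i => //.
have nbp w : g i w -> w \in p.
  move=> giw; have := nb w; rewrite /= giw in_cons => /negbFE /orP[/eqP wi|] //.
  by move: giw; rewrite wi (negbTE (girr i)).
case: p pth un nbp {fuel nb} => [_ _ nbp w w' /nbp // | x p pth un nbp].
suff all_x z : g i z -> z = x by move=> w w' /all_x -> /all_x.
move=> giz; have := nbp z giz; rewrite in_cons => /orP[/eqP //| zp].
case/splitPr: zp pth un => s1 s2 pth un; exfalso; apply: nocycle.
exists i, (x :: rcons s1 z); split.
- by rewrite /= size_rcons.
- by move: pth; rewrite /= cat_path rcons_path /= => /and3P[-> -> /andP[-> _]].
- by move: un; rewrite -cat_rcons -!cat_cons cat_uniq => /andP[].
- by rewrite /= last_rcons gsym.
Qed.

Hypothesis g_sym : symmetric g.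

Lemma spath_leaf_notin v i j p : leaf v -> spath g i j p -> j != v -> v \notin p.
Proof.
move=> lv /and3P[pth /eqP <- un] lastv; apply/negP => vp.
case/splitPr: vp pth un lastv => s1 [|w s2] pth un; first by rewrite last_cat eqxx.
move=> _; move: pth; rewrite cat_path /= => /and3P[_ zv /andP[vw _]].
have zw : last i s1 = w by apply: lv => //; rewrite g_sym.
move: un; rewrite -cat_cons cat_uniq => /and3P[_ /hasPn /(_ w)] + _.
by rewrite !in_cons eqxx orbT -in_cons -zw mem_last => /(_ isT).
Qed.

End SimplePaths.

Section InducedSubgraphs.

Variables (L : nat) (e : rel 'I_L).

Lemma induced_sym S : symmetric e -> symmetric (induced e S).
Proof. by move=> esym x y; rewrite /induced /= esym andbCA. Qed.

Lemma induced_forest S : forest e -> forest (induced e S).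
Proof.
move=> [[esym eirr] nocycle]; split.
  by split=> [|x]; [exact: induced_sym | rewrite /induced /= (negbTE (eirr x)) !andbF].
move=> [i [p [sz pth un last_i]]]; apply: nocycle; exists i, p; split=> //.
  by apply: sub_path pth => x y /and3P[].
by case/and3P: last_i.
Qed.

Lemma induced_leaf S : forest e -> S != set0 -> exists2 v, v \in S & leaf (induced e S) v.
Proof.
move=> fe /set0Pn[i iS]; have [v iv lv] := forest_leaf i (induced_forest S fe).
exists v => //; rewrite -(closed_connect _ iv) //.
by move=> x y /and3P[-> ->].
Qed.

Lemma induced_mem_setD1 S v u : irreflexive e -> induced e S v u -> u \in S :\ v.
Proof.
move=> eirr /and3P[_ uS evu]; rewrite in_setD1 uS andbT.
by apply: contraTneq evu => ->; rewrite eirr.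
Qed.

Lemma spath_induced_setD1 S v i j p :
  symmetric e -> leaf (induced e S) v -> i != v -> j != v ->
  spath (induced e (S :\ v)) i j p = spath (induced e S) i j p.
Proof.
move=> esym lv iv jv; apply/idP/idP => /and3P[pth lst un]; apply/and3P; split=> //.
  by apply: sub_path pth => x y /and3P[/setD1P[_ xS] /setD1P[_ yS] exy]; apply/and3P.
have vp := spath_leaf_notin (induced_sym S esym) lv (introT and3P (And3 pth lst un)) jv.
apply: (sub_in_path (P := predC1 v)) pth.
  move=> x y; rewrite !inE => xv yv /and3P[xS yS exy].
  by apply/and3P; rewrite !in_setD1 xv yv xS yS.
by rewrite /= iv all_predC has_pred1.
Qed.

End InducedSubgraphs.

Section PathWeights.

Variables (R : nzRingType) (L : nat) (W : 'I_L -> 'I_L -> R).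

Lemma pweight_nil i : pweight W i [::] = 0.
Proof. by rewrite /pweight big_nil. Qed.

Lemma pweight_cons i k p : pweight W i (k :: p) = W i k + pweight W k p.
Proof. by rewrite /pweight big_cons. Qed.

Lemma pweight_rcons i p k : pweight W i (rcons p k) = pweight W i p + W (last i p) k.
Proof.
elim: p i => [|x p IH] i /=; first by rewrite pweight_cons !pweight_nil addr0 add0r.
by rewrite !pweight_cons IH addrA.
Qed.

End PathWeights.

Section LeafElimination.

Variables (R : nzRingType) (L : nat) (S : {set 'I_L}) (v u : 'I_L).
Variables (G : 'M[R]_L) (t : R) (x : 'I_L -> R).
Hypotheses (vS : v \in S) (uS : u \in S :\ v).
Hypothesis G_col : forall i, i \in S :\ v -> G i v = G i u * t.

Lemma sum_eliminate_leaf i : i \in S :\ v ->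
  \sum_(j in S) G i j * x j =
  \sum_(j in S :\ v) G i j * (if j == u then x u + t * x v else x j).
Proof.
move=> iS; rewrite (big_setD1 v vS) (big_setD1 u uS) [RHS](big_setD1 u uS) eqxx /=.
rewrite G_col // mulrDr -mulrA addrA [_ * (t * _) + _]addrC; congr (_ + _).
by apply: eq_bigr => j /setD1P[/negbTE -> _].
Qed.

Hypotheses (G_vv : G v v = 1) (G_uu : G u u = 1).
Hypothesis G_row : forall j, j \in S :\ v -> G v j = t * G u j.

Lemma sum_eliminate_leaf_row :
  \sum_(j in S) G v j * x j =
  x v + t * (\sum_(j in S :\ v) G u j * (if j == u then x u + t * x v else x j) - t * x v).
Proof.
rewrite -(sum_eliminate_leaf uS) (big_setD1 v vS) [in RHS](big_setD1 v vS) /=.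
rewrite G_vv mul1r G_col // G_uu mul1r [t * x v + _]addrC addrK mulr_sumr.
by congr (_ + _); apply: eq_bigr => j jS; rewrite G_row // mulrA.
Qed.

End LeafElimination.

Section MasksOnSubsets.

Variables (R : nzRingType) (L : nat) (e : rel 'I_L).
Variables (W : 'I_L -> 'I_L -> R) (f : R -> R).

Definition is_mask_on (S : {set 'I_L}) (G : 'M[R]_L) : Prop :=
  forall i j, i \in S -> j \in S ->
    (forall p, spath (induced e S) i j p -> G i j = f (pweight W i p)) /\
    ((forall p, ~~ spath (induced e S) i j p) -> G i j = 0).

Hypotheses (e_sym : symmetric e) (e_irr : irreflexive e) (f0 : f 0 = 1).
Hypothesis fD : forall x y, f (x + y) = f x * f y.
Hypothesis W_sym : forall x y, W x y = W y x.

Lemma is_mask_on_setD1 S v G :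
  leaf (induced e S) v -> is_mask_on S G -> is_mask_on (S :\ v) G.
Proof.
move=> lv HG i j /setD1P[iv iS] /setD1P[jv jS].
have [Hpath Hnopath] := HG i j iS jS.
have eq_spath : spath (induced e (S :\ v)) i j =1 spath (induced e S) i j.
  by move=> p; apply: spath_induced_setD1.
by split=> [p | nop]; [rewrite eq_spath; apply: Hpath | apply: Hnopath => p; rewrite -eq_spath].
Qed.

Lemma is_mask_on_diag (S : {set 'I_L}) v (G : 'M[R]_L) : v \in S -> is_mask_on S G -> G v v = 1.
Proof.
move=> vS /(_ v v vS vS) [Hpath _].
by rewrite (Hpath [::]) ?pweight_nil ?f0 // /spath /= eqxx.
Qed.

Section Leaf.

Variables (S : {set 'I_L}) (v : 'I_L) (G : 'M[R]_L).
Hypotheses (vS : v \in S) (lv : leaf (induced e S) v) (HG : is_mask_on S G).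

Let g_sym : symmetric (induced e S) := induced_sym S e_sym.

Lemma is_mask_on_col_isolated i : (forall w, ~~ induced e S v w) -> i \in S :\ v -> G i v = 0.
Proof.
move=> iso /setD1P[iv iS]; apply: (HG iS vS).2 => q; apply/negP.
by move=> /(spath_last_edge iv) [p _ [gzv _]]; move: gzv; rewrite g_sym (negbTE (iso _)).
Qed.

Lemma is_mask_on_row_isolated j : (forall w, ~~ induced e S v w) -> j \in S :\ v -> G v j = 0.
Proof.
move=> iso /setD1P[jv jS]; apply: (HG vS jS).2 => q; apply/negP.
rewrite eq_sym in jv.
by move=> /(spath_first_edge jv) [k [p [_ gvk _]]]; move: gvk; rewrite (negbTE (iso _)).
Qed.

Variable u : 'I_L.
Hypothesis gvu : induced e S v u.

Let uSv : u \in S :\ v := induced_mem_setD1 e_irr gvu.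
Let uS : u \in S. Proof. by case/setD1P: uSv. Qed.
Let uv : u != v. Proof. by case/setD1P: uSv. Qed.

Lemma is_mask_on_col_pendant i : i \in S :\ v -> G i v = G i u * f (W u v).
Proof.
move=> /setD1P[iv iS].
have [[p sp] | nop] := pselect (exists p, spath (induced e S) i u p).
  have lst : last i p = u by case/and3P: sp => _ /eqP.
  have sp' : spath (induced e S) i v (rcons p v).
    rewrite spath_rcons lst sp g_sym gvu eqxx in_cons eq_sym (negbTE iv) andbT /=.
    exact: (spath_leaf_notin g_sym lv sp uv).
  by rewrite ((HG iS vS).1 _ sp') ((HG iS uS).1 _ sp) pweight_rcons lst fD.
rewrite (HG iS uS).2 ?mul0r => [|p]; last by apply/negP => sp; apply: nop; exists p.
apply: (HG iS vS).2 => q; apply/negP => /(spath_last_edge iv) [p _ [gzv sp]].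
have zu : last i p = u by apply: lv; rewrite // g_sym.
by apply: nop; exists p; rewrite -zu.
Qed.

Lemma is_mask_on_row_pendant j : j \in S :\ v -> G v j = f (W v u) * G u j.
Proof.
move=> /setD1P[jv jS].
have [[p sp] | nop] := pselect (exists p, spath (induced e S) u j p).
  have sp' : spath (induced e S) v j (u :: p).
    rewrite spath_cons gvu sp in_cons eq_sym (negbTE uv) andbT /=.
    exact: (spath_leaf_notin g_sym lv sp jv).
  by rewrite ((HG vS jS).1 _ sp') ((HG uS jS).1 _ sp) pweight_cons fD.
rewrite (HG uS jS).2 ?mulr0 => [|p]; last by apply/negP => sp; apply: nop; exists p.
rewrite eq_sym in jv.
apply: (HG vS jS).2 => q; apply/negP => /(spath_first_edge jv) [k [p [_ gvk sp]]].
have ku : k = u by apply: lv.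
by apply: nop; exists p; rewrite -ku.
Qed.

Lemma is_mask_on_mulmx_pendant x i : i \in S :\ v ->
  \sum_(j in S) G i j * x j =
  \sum_(j in S :\ v) G i j * (if j == u then x u + f (W u v) * x v else x j).
Proof. by apply: sum_eliminate_leaf => // k; apply: is_mask_on_col_pendant. Qed.

Lemma is_mask_on_mulmx_pendant_row x :
  \sum_(j in S) G v j * x j =
  x v + f (W u v) * (\sum_(j in S :\ v) G u j *
                      (if j == u then x u + f (W u v) * x v else x j) - f (W u v) * x v).
Proof.
apply: sum_eliminate_leaf_row => //.
- by move=> k; apply: is_mask_on_col_pendant.
- exact: is_mask_on_diag vS HG.
- exact: is_mask_on_diag uS HG.
- by move=> k kSv; rewrite is_mask_on_row_pendant // W_sym.
Qed.

End Leaf.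

End MasksOnSubsets.

Lemma is_mask_on_setT_expR (R : realType) (L : nat) (e : rel 'I_L) W (a b : R) (M : 'M[R]_L) :
  is_mask e W (fun z => expR (a * z + b)) M ->
  is_mask_on e W (fun z => expR (a * z)) [set: 'I_L] (expR (- b) *: M).
Proof.
have eq_spath i j : spath (induced e [set: 'I_L]) i j =1 spath e i j.
  by move=> p; rewrite /spath (@eq_path _ _ e) // => x y; rewrite /induced /= !in_setT.
move=> HM i j _ _; have [Hpath Hnopath] := HM i j; rewrite mxE; split=> [p | nop].
  by rewrite eq_spath => /Hpath ->; rewrite -expRD addrCA addNr addr0.
by rewrite Hnopath ?mulr0 // => p; rewrite -eq_spath.
Qed.

Lemma nth_cat_size (T : Type) (x0 : T) (s1 s2 : seq T) k :
  nth x0 (s1 ++ s2) (size s1 + k) = nth x0 s2 k.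
Proof. by rewrite nth_cat ltnNge leq_addr /= addKn. Qed.

Lemma nth_cat_size0 (T : Type) (x0 : T) (s1 s2 : seq T) :
  nth x0 (s1 ++ s2) (size s1) = nth x0 s2 0.
Proof. by rewrite -[size s1]addn0 nth_cat_size. Qed.

Section StraightLinePrograms.

Variables (R : realType) (L : nat) (env : input L -> R).

Definition run_from (vs : seq R) (prog : seq (instr L)) : seq R :=
  foldl (fun vs ins => rcons vs (step env vs ins)) vs prog.

Lemma runE prog : run env prog = run_from [::] prog.
Proof. by []. Qed.

Lemma run_from_cat vs p1 p2 : run_from vs (p1 ++ p2) = run_from (run_from vs p1) p2.
Proof. exact: foldl_cat. Qed.

Lemma size_run_from vs prog : size (run_from vs prog) = (size vs + size prog)%N.
Proof.
elim: prog vs => [|ins prog IH] vs /=; first by rewrite addn0.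
by rewrite IH size_rcons addSnnS.
Qed.

Lemma nth_run_from vs prog k : (k < size vs)%N -> nth 0 (run_from vs prog) k = nth 0 vs k.
Proof.
elim: prog vs => [|ins prog IH] vs //= lt_k.
by rewrite IH ?size_rcons 1?ltnW // nth_rcons lt_k.
Qed.

Lemma run_from_map (T : Type) vs (f : T -> instr L) (g : T -> R) s :
  (forall k ws, step env (vs ++ ws) (f k) = g k) ->
  run_from vs (map f s) = vs ++ map g s.
Proof.
move=> step_f.
suff gen ws : run_from (vs ++ ws) (map f s) = vs ++ ws ++ map g s.
  by have := gen [::]; rewrite !cats0.
elim: s ws => [|k s IH] ws /=; first by rewrite cats0.
by rewrite step_f rcons_cat IH cat_rcons.
Qed.

Definition pendant_pre (n0 : nat) (u v : 'I_L) (xu xv : nat) : seq (instr L) :=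
  [:: ILoad (InA L); ILoad (InW u v); IMul L n0 (n0 + 1); IExp L (n0 + 2);
      IMul L (n0 + 3) xv; IAdd L xu (n0 + 4)].

Lemma run_pendant_pre vs u v xu xv : (xu < size vs)%N -> (xv < size vs)%N ->
  let t := expR (env (InA L) * env (InW u v)) in
  run_from vs (pendant_pre (size vs) u v xu xv) =
  vs ++ [:: env (InA L); env (InW u v); env (InA L) * env (InW u v); t;
            t * nth 0 vs xv; nth 0 vs xu + t * nth 0 vs xv].
Proof.
move=> xu_lt xv_lt; rewrite /run_from /= -!cats1 -!catA /=.
by rewrite !nth_cat_size0 !nth_cat_size /= !nth_cat xu_lt xv_lt.
Qed.

Definition pendant_post (n0 n yu xv : nat) : seq (instr L) :=
  [:: ISub L yu (n0 + 4); IMul L (n0 + 3) n; IAdd L xv (n + 1)].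

Lemma run_pendant_post vs n0 yu xv :
  (n0 + 3 < size vs)%N -> (xv < size vs)%N ->
  let d := nth 0 vs yu - nth 0 vs (n0 + 4) in
  run_from vs (pendant_post n0 (size vs) yu xv) =
  vs ++ [:: d; nth 0 vs (n0 + 3) * d; nth 0 vs xv + nth 0 vs (n0 + 3) * d].
Proof.
move=> n0_lt xv_lt; rewrite /run_from /= -!cats1 -!catA /=.
by rewrite !nth_cat_size0 !nth_cat_size /= !nth_cat n0_lt xv_lt.
Qed.

Definition load_inputs : seq (instr L) :=
  [:: ILoad (InB L); IExp L 0] ++ [seq ILoad (InX j) | j <- enum 'I_L].

Definition scale_outputs (c : nat) (out : 'I_L -> nat) : seq (instr L) :=
  [seq IMul L c (out i) | i <- enum 'I_L].

Lemma run_load_inputs :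
  run env load_inputs =
  [:: env (InB L); expR (env (InB L))] ++ [seq env (InX j) | j <- enum 'I_L].
Proof. by rewrite runE run_from_cat (run_from_map (g := fun j => env (InX j))). Qed.

Lemma run_scale_outputs vs c out : (c < size vs)%N -> (forall i, out i < size vs)%N ->
  run_from vs (scale_outputs c out) =
  vs ++ [seq nth 0 vs c * nth 0 vs (out i) | i <- enum 'I_L].
Proof. by move=> c_lt out_lt; apply: run_from_map => k ws /=; rewrite !nth_cat c_lt out_lt. Qed.

End StraightLinePrograms.

Definition mask_mul_program (R : realType) (L : nat) (e : rel 'I_L) (S : {set 'I_L})
    (px : 'I_L -> nat) (n0 : nat) (prog : seq (instr L)) (out : 'I_L -> nat) : Prop :=
  (forall i, (out i < n0 + size prog)%N) /\
  forall (env : input L -> R) (vs : seq R) (G : 'M[R]_L),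
    (forall x y, env (InW x y) = env (InW y x)) -> size vs = n0 ->
    is_mask_on e (fun x y => env (InW x y)) (fun z => expR (env (InA L) * z)) S G ->
    forall i, i \in S ->
      nth 0 (run_from env vs prog) (out i) = \sum_(j in S) G i j * nth 0 vs (px j).

Section MaskMulPrograms.

Variables (R : realType) (L : nat) (e : rel 'I_L).
Hypotheses (e_sym : symmetric e) (e_irr : irreflexive e).

Lemma mask_mul_program_set0 px n0 :
  (forall j, px j < n0)%N -> mask_mul_program R e set0 px n0 [::] px.
Proof. by move=> px_lt; split=> [i|env vs G _ _ _ i]; rewrite ?addn0 ?inE. Qed.

Lemma mask_mul_program_isolated (S : {set 'I_L}) v px n0 prog out :
  v \in S -> (forall w, ~~ induced e S v w) -> (px v < n0)%N ->
  mask_mul_program R e (S :\ v) px n0 prog out ->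
  mask_mul_program R e S px n0 prog (fun i => if i == v then px v else out i).
Proof.
move=> vS iso pv_lt [out_lt prog_ok]; split=> [i | env vs G W_sym size_vs HG i iS].
  by case: eqP => _ //; apply: leq_trans (leq_addr _ _).
have lv : leaf (induced e S) v by move=> w w' gvw; have := iso w; rewrite gvw.
have f0 : expR (env (InA L) * 0) = 1 by rewrite mulr0 expR0.
rewrite (big_setD1 v vS) /=; case: eqVneq => [-> | iv].
  rewrite (is_mask_on_diag f0 vS HG) mul1r nth_run_from ?size_vs // big1 ?addr0 // => j jSv.
  by rewrite (is_mask_on_row_isolated vS HG iso jSv) mul0r.
have iSv : i \in S :\ v by rewrite in_setD1 iv iS.
rewrite (is_mask_on_col_isolated e_sym vS HG iso iSv) mul0r add0r.
exact: prog_ok (is_mask_on_setD1 e_sym lv HG) _ iSv.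
Qed.

Lemma mask_mul_program_pendant (S : {set 'I_L}) v u px n0 prog out :
  v \in S -> leaf (induced e S) v -> induced e S v u ->
  (forall j, px j < n0)%N ->
  mask_mul_program R e (S :\ v) (fun j => if j == u then (n0 + 5)%N else px j)
    (n0 + 6) prog out ->
  mask_mul_program R e S px n0
    (pendant_pre n0 u v (px u) (px v) ++ prog ++
     pendant_post L n0 (n0 + 6 + size prog) (out u) (px v))
    (fun i => if i == v then (n0 + 6 + size prog + 2)%N else out i).
Proof.
move=> vS lv gvu px_lt [out_lt prog_ok].
split=> [i | env vs G W_sym size_vs HG i iS].
  by rewrite !size_cat /=; case: eqP => _; last have := out_lt i; lia.
pose f z := expR (env (InA L) * z).
have f0 : f 0 = 1 by rewrite /f mulr0 expR0.
have fD x y : f (x + y) = f x * f y by rewrite /f mulrDr expRD.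
pose X j := nth 0 vs (px j).
rewrite (run_from_cat env vs) -size_vs run_pendant_pre size_vs ?px_lt // run_from_cat.
set t := expR _.
set vs1 := vs ++ _; set vs2 := run_from env vs1 prog.
have size_vs1 : size vs1 = (n0 + 6)%N by rewrite size_cat size_vs.
have size_vs2 : size vs2 = (n0 + 6 + size prog)%N by rewrite size_run_from size_vs1.
have vs1_X j : nth 0 vs1 (if j == u then (n0 + 5)%N else px j) =
               if j == u then X u + t * X v else X j.
  by case: eqP => _; [rewrite -size_vs nth_cat_size | rewrite nth_cat size_vs px_lt].
have vs2_vs1 k : (k < n0 + 6)%N -> nth 0 vs2 k = nth 0 vs1 k.
  by move=> k_lt; rewrite nth_run_from ?size_vs1.
have rec_ok k : k \in S :\ v -> nth 0 vs2 (out k) =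
    \sum_(j in S :\ v) G k j * (if j == u then X u + t * X v else X j).
  move=> kSv; rewrite (prog_ok env vs1 G W_sym size_vs1 (is_mask_on_setD1 e_sym lv HG)) //.
  by apply: eq_bigr => j _; rewrite vs1_X.
case: eqVneq => [-> | iv]; last first.
  have iSv : i \in S :\ v by rewrite in_setD1 iv iS.
  rewrite nth_run_from ?size_vs2 // rec_ok //.
  by rewrite (is_mask_on_mulmx_pendant e_sym e_irr fD vS lv HG gvu X iSv).
have vs2_t : nth 0 vs2 (n0 + 3) = t by rewrite vs2_vs1 ?ltn_add2l // -size_vs nth_cat_size.
have vs2_tX : nth 0 vs2 (n0 + 4) = t * X v.
  by rewrite vs2_vs1 ?ltn_add2l // -size_vs nth_cat_size.
have vs2_X : nth 0 vs2 (px v) = X v.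
  by rewrite vs2_vs1 ?nth_cat ?size_vs ?px_lt //; apply: ltn_addr.
have lt3 : (n0 + 3 < size vs2)%N by rewrite size_vs2; lia.
have ltv : (px v < size vs2)%N by rewrite size_vs2; have := px_lt v; lia.
rewrite -size_vs2 run_pendant_post // nth_cat_size /=.
rewrite vs2_t vs2_tX vs2_X rec_ok ?(induced_mem_setD1 e_irr gvu) //.
by rewrite (is_mask_on_mulmx_pendant_row e_sym e_irr f0 fD W_sym vS lv HG gvu X).
Qed.

End MaskMulPrograms.

Lemma mask_mul_program_exists (R : realType) (L : nat) (e : rel 'I_L) (S : {set 'I_L}) px n0 :
  forest e -> (forall j, px j < n0)%N ->
  exists prog out, (size prog <= 9 * #|S|)%N /\ mask_mul_program R e S px n0 prog out.
Proof.
move=> fe; have [[e_sym e_irr] _] := fe.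
have {}e_irr : irreflexive e by move=> x; apply/negbTE.
have [n] := ubnP #|S|; elim: n => // n IH in S px n0 *; rewrite ltnS => card_S px_lt.
have [-> | /(induced_leaf fe) [v vS lv]] := eqVneq S set0.
  by exists [::], px; split; last exact: mask_mul_program_set0.
have card_Sv : (#|S :\ v| < n)%N by rewrite (cardsD1 v S) vS in card_S.
have [[u gvu] | iso] := pselect (exists u, induced e S v u).
  pose px' j := if j == u then (n0 + 5)%N else px j.
  have px'_lt j : (px' j < n0 + 6)%N by rewrite /px'; case: eqP; last have := px_lt j; lia.
  have [prog [out [size_prog prog_ok]]] := IH (S :\ v) px' (n0 + 6)%N card_Sv px'_lt.
  eexists; eexists; split; last first.
    exact: (mask_mul_program_pendant e_sym e_irr vS lv gvu px_lt prog_ok).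
  by move: size_prog; rewrite !size_cat (cardsD1 v S) vS add1n /=; lia.
have [prog [out [size_prog prog_ok]]] := IH (S :\ v) px n0 card_Sv px_lt.
exists prog, (fun i => if i == v then px v else out i); split.
  by move: size_prog; rewrite (cardsD1 v S) vS add1n; lia.
apply: (mask_mul_program_isolated e_sym vS) prog_ok => [w|]; last exact: px_lt.
by apply/negP => gvw; apply: iso; exists w.
Qed.

Theorem lemma3p5 (R : realType) :
  exists C : nat, forall (L : nat) (e : rel 'I_L), forest e ->
    exists (prog : seq (instr L)) (out : 'I_L -> nat),
      (size prog <= C * L)%N /\
      forall (W : 'I_L -> 'I_L -> R) (a b : R) (x : 'I_L -> R) (M : 'M[R]_L),
        (forall i j, W i j = W j i) ->
        is_mask e W (fun z => expR (a * z + b)) M ->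
        forall i : 'I_L,
          nth 0 (run (env_of x a b W) prog) (out i) = \sum_(j < L) M i j * x j.
Proof.
exists 13%N => -[|L] e fe; first by exists [::], (fun _ => 0%N); split=> // W a b x M _ _ [].
pose px (j : 'I_L.+1) := (2 + j)%N.
have px_lt j : (px j < 2 + L.+1)%N by rewrite ltn_add2l.
have [core [out [size_core [out_lt core_ok]]]] :=
  mask_mul_program_exists R [set: 'I_L.+1] fe px_lt.
exists (load_inputs L.+1 ++ core ++ scale_outputs 1 out), (fun i => 2 + L.+1 + size core + i)%N.
split=> [|W a b x M W_sym HM i].
  move: size_core; rewrite /load_inputs /scale_outputs !size_cat !size_map -enumT.
  by rewrite size_enum_ord cardsT card_ord /=; lia.
set env := env_of x a b W.
have size_in : size (run env (load_inputs L.+1)) = (2 + L.+1)%N.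
  by rewrite run_load_inputs size_cat size_map size_enum_ord.
rewrite runE run_from_cat -runE run_from_cat.
set vs1 := run env _; set vs2 := run_from env vs1 core.
have size_vs2 : size vs2 = (2 + L.+1 + size core)%N by rewrite size_run_from size_in.
have one_lt : (1 < size vs2)%N by rewrite size_vs2.
have out_lt' k : (out k < size vs2)%N by rewrite size_vs2.
rewrite run_scale_outputs //.
rewrite -size_vs2 nth_cat_size (nth_map i) ?size_enum_ord // nth_ord_enum.
rewrite (core_ok env vs1 _ W_sym size_in (is_mask_on_setT_expR HM)) // nth_run_from ?size_in //.
rewrite /vs1 run_load_inputs /= mulr_sumr; apply: eq_big => [j | j _]; first by rewrite in_setT.
rewrite mxE add0n (nth_map j) ?size_enum_ord // nth_ord_enum.
by rewrite !mulrA -expRD subrr expR0 mul1r.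
Qed.
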